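(* Let $k\ge 2$ and let $G$ be a digraph. Let $G'$ be the digraph constructed as follows: for each vertex $u$ of $G$, $G'$ has $k+1$ vertices $u^-,u^+,u_1,\dots,u_{k-1}$; for each $u$, both $\{u^-,u_1,\dots,u_{k-1}\}$ and $\{u^+,u_1,\dots,u_{k-1}\}$ induce symmetric complete digraphs (every pair joined by a digon), and $u^-u^+$ is an arc; for every arc $uv$ of $G$, $u^+v^-$ is an arc of $G'$; there are no other arcs. Then $\Delta_{min}(G')\le k$, and $G$ is $k$-dicolourable if and only if $G'$ is $k$-dicolourable.
   Context: Digraphs have no loops and no parallel arcs, but may contain digons. A digraph is $k$-dicolourable if its vertices can be coloured with $k$ colours so that no directed cycle is monochromatic. $\Delta_{min}(G)=\max_{v}\min(d^+(v),d^-(v))$. *)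

From mathcomp Require Import all_boot.
Set Implicit Arguments. Unset Strict Implicit. Unset Printing Implicit Defensive.

(* A digraph on a finite vertex type V is an arc relation e : rel V which is
   irreflexive (no loops); parallel arcs are impossible, digons are allowed. *)

Section Digraphs.
Variable V : finType.
Variable e : rel V.

Definition outdeg (v : V) : nat := #|[set w | e v w]|.
Definition indeg (v : V) : nat := #|[set w | e w v]|.

Definition delta_min : nat := \max_(v : V) minn (outdeg v) (indeg v).

Definition dicycle (c : seq V) : Prop := [/\ c != [::], uniq c & cycle e c].

Definition dicolourable (k : nat) : Prop :=
  exists f : V -> 'I_k, forall c : seq V, dicycle c ->
    exists x, exists y, [/\ x \in c, y \in c & f x != f y].
End Digraphs.

(* The construction G'.  Vertex (u, i) with i : 'I_k.+1 encodes
   i = 0 : u^-,  i = 1 : u^+,  i = j+1 (1 <= j <= k-1) : u_j. *)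
Definition gadget_vertex (V : finType) (k : nat) := (V * 'I_k.+1)%type.

Definition is_minus k (i : 'I_k.+1) : bool := val i == 0.
Definition is_plus k (i : 'I_k.+1) : bool := val i == 1.

Definition gadget_arc (V : finType) (k : nat) (e : rel V) :
  rel (gadget_vertex V k) :=
  fun x y =>
    [|| [&& x.1 == y.1, x.2 != y.2 &
          [|| ~~ is_plus x.2 && ~~ is_plus y.2,     (* clique on {u^-, u_1..u_{k-1}} *)
              ~~ is_minus x.2 && ~~ is_minus y.2    (* clique on {u^+, u_1..u_{k-1}} *)
            | is_minus x.2 && is_plus y.2]]         (* arc u^- u^+ *)
      | [&& is_plus x.2, is_minus y.2 & e x.1 y.1]]. (* arc u^+ v^- for uv in G *)

From mathcomp Require Import all_boot zify.
Set Implicit Arguments. Unset Strict Implicit. Unset Printing Implicit Defensive.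

(* Write k = n + 2 and call u^- and u^+ the "ports" of the gadget of u; the
   other k - 1 vertices u_1 .. u_{k-1} are "internal".

   - Delta_min(G') <= k: an internal vertex or u^- has all its out-neighbours
     in its own gadget, and u^+ has all its in-neighbours there; a gadget has
     k vertices besides the one considered.
   - G' k-dicolourable => G k-dicolourable: in a good colouring of G' the
     digons make {u^-, u_1, .., u_{k-1}} rainbow, so u^+ (joined by digons
     to every u_j) must take the colour of u^-.  Colouring u by the colour of
     u^- then works, since every dicycle u v w .. of G lifts to the dicycle
     u^- u^+ v^- v^+ .. of G'.
   - G k-dicolourable => G' k-dicolourable: colour u^-, u^+ like u and give
     u_1 .. u_{k-1} the k - 1 remaining colours.  Every arc leaving an
     internal vertex is bichromatic, so a monochromatic dicycle of G' uses
     only ports; such a dicycle alternates u^- u^+ v^- v^+ .., hence is the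
     lift of a monochromatic dicycle of G. *)

Section GoodColourings.
Variables (T : finType) (g : rel T) (k : nat).

Definition good_colouring (f : T -> 'I_k) : Prop :=
  forall c, dicycle g c -> exists x y, [/\ x \in c, y \in c & f x != f y].

Lemma good_colouring_digon f x y :
  good_colouring f -> x != y -> g x y -> g y x -> f x != f y.
Proof.
move=> good_f neq_xy gxy gyx.
have [|a [b [a_xy b_xy]]] := good_f [:: x; y].
  by split; rewrite /= ?inE ?neq_xy ?gxy ?gyx.
by move: a_xy b_xy; rewrite !inE => /pred2P[]-> /pred2P[]->; rewrite ?eqxx // eq_sym.
Qed.

End GoodColourings.

Lemma injective_onto_colours (T : finType) (k : nat) (A : {set T}) (f : T -> 'I_k) :
  {in A &, injective f} -> #|A| = k -> forall c, exists2 x, x \in A & f x = c.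
Proof.
move=> inj_f card_A c.
have /eqP im_f : f @: A == [set: 'I_k].
  by rewrite eqEcard subsetT cardsT card_ord card_in_imset // card_A leqnn.
have /imsetP[x x_A ->] : c \in f @: A by rewrite im_f inE.
by exists x.
Qed.

Section Gadget.
Variables (V : finType) (n : nat) (e : rel V).

Local Notation k := n.+2.
Local Notation arc := (@gadget_arc V k e).

Definition plus_idx : 'I_k.+1 := @Ordinal k.+1 1 isT.

Definition port (i : 'I_k.+1) : bool := val i <= 1.

Lemma is_minusE (i : 'I_k.+1) : is_minus i = (i == ord0).
Proof. by rewrite -val_eqE. Qed.

Lemma is_plusE (i : 'I_k.+1) : is_plus i = (i == plus_idx).
Proof. by rewrite -val_eqE. Qed.

Lemma portE (i : 'I_k.+1) : port i = (i == ord0) || (i == plus_idx).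
Proof. by rewrite -!val_eqE; case: i => [[|[|m]] lt_m]. Qed.

Lemma portP (i : 'I_k.+1) : port i -> i = ord0 \/ i = plus_idx.
Proof. by rewrite portE => /orP[]/eqP; [left | right]. Qed.

Lemma arc_plus_minus u v : arc (u, plus_idx) (v, ord0) = e u v.
Proof. by rewrite /gadget_arc /is_plus /is_minus /= andbF. Qed.

Lemma arc_minus_plus u v : arc (u, ord0) (v, plus_idx) = (u == v).
Proof. by rewrite /gadget_arc /is_plus /is_minus /= andbT orbF. Qed.

Lemma arc_minus_minus u v : arc (u, ord0) (v, ord0) = false.
Proof. by rewrite /gadget_arc /is_plus /is_minus /= andbF. Qed.

Lemma arc_plus_plus u v : arc (u, plus_idx) (v, plus_idx) = false.
Proof. by rewrite /gadget_arc /is_plus /is_minus /= andbF. Qed.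

Lemma arc_minus_clique u (i j : 'I_k.+1) :
  i != plus_idx -> j != plus_idx -> i != j -> arc (u, i) (u, j).
Proof. by rewrite /gadget_arc !is_plusE /= eqxx => -> -> ->. Qed.

Lemma arc_plus_clique u (i j : 'I_k.+1) :
  i != ord0 -> j != ord0 -> i != j -> arc (u, i) (u, j).
Proof. by rewrite /gadget_arc !is_minusE /= eqxx => -> -> ->; rewrite orbT. Qed.

Lemma arc_out_local u (i : 'I_k.+1) y :
  i != plus_idx -> arc (u, i) y -> y.1 = u /\ y.2 != i.
Proof.
rewrite /gadget_arc is_plusE => /negbTE-> /=.
by rewrite orbF => /and3P[/eqP<- neq_ij _]; rewrite eq_sym.
Qed.

Lemma arc_in_plus_local u x :
  arc x (u, plus_idx) -> x.1 = u /\ x.2 != plus_idx.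
Proof.
rewrite /gadget_arc /= !andbF orbF.
by case/and3P => /eqP-> neq_ij _.
Qed.

Lemma local_set_card (P : pred (gadget_vertex V k)) u (i : 'I_k.+1) :
  (forall y, P y -> y.1 = u /\ y.2 != i) -> #|[set y | P y]| <= k.
Proof.
move=> local_P; apply: (@leq_trans #|[set (u, j) | j in [set~ i]]|).
  apply/subset_leq_card/subsetP => -[v j]; rewrite inE => /local_P[/= -> neq_ji].
  by apply/imsetP; exists j; rewrite ?in_setC1.
by rewrite (leq_trans (leq_imset_card _ _)) // cardsC1 card_ord.
Qed.

Lemma delta_min_gadget : delta_min arc <= k.
Proof.
apply/bigmax_leqP => -[u i] _; rewrite geq_min.
have [->|not_plus] := eqVneq i plus_idx.
  by rewrite orbC /indeg (local_set_card (@arc_in_plus_local u)).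
by rewrite /outdeg (local_set_card (fun y => @arc_out_local u i y not_plus)).
Qed.

Definition lift_seq (s : seq V) : seq (gadget_vertex V k) :=
  flatten [seq [:: (u, ord0); (u, plus_idx)] | u <- s].

Lemma lift_seq_cons u s :
  lift_seq (u :: s) = (u, ord0) :: (u, plus_idx) :: lift_seq s.
Proof. by []. Qed.

Lemma path_lift_seq u s : path arc (u, plus_idx) (lift_seq s) = path e u s.
Proof.
by elim: s u => [|v s IH] u //=; rewrite arc_plus_minus arc_minus_plus eqxx IH.
Qed.

Lemma last_lift_seq u s : last (u, plus_idx) (lift_seq s) = (last u s, plus_idx).
Proof. by elim: s u => [|v s IH] u //=. Qed.

Lemma cycle_lift_seq s : cycle arc (lift_seq s) = cycle e s.
Proof.
case: s => [|u s] //; rewrite lift_seq_cons /= rcons_path arc_minus_plus eqxx.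
by rewrite path_lift_seq last_lift_seq arc_plus_minus rcons_path.
Qed.

Lemma mem_lift_seq x s : (x \in lift_seq s) = (x.1 \in s) && port x.2.
Proof.
case: x => u i; elim: s => [|v s IH] //=.
rewrite !inE IH /= !xpair_eqE portE.
by case: (u == v) (u \in s) (i == ord0) (i == plus_idx) => [] [] [] [].
Qed.

Lemma uniq_lift_seq s : uniq (lift_seq s) = uniq s.
Proof.
elim: s => [|u s IH] //; rewrite lift_seq_cons /= inE !mem_lift_seq IH /=.
by rewrite xpair_eqE andbF andbT /=; case: (u \in s).
Qed.

(* In a good colouring of G' both ports of a gadget get the same colour: the
   clique {u^-, u_1, .., u_{k-1}} uses all k colours and u^+ is joined by
   digons to every u_j, so u^+ can only share the colour of u^-. *)
Lemma good_colouring_ports (f : gadget_vertex V k -> 'I_k) :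
  good_colouring arc f -> forall u, f (u, ord0) = f (u, plus_idx).
Proof.
move=> good_f u.
have rainbow : {in [set~ plus_idx] &, injective (fun j => f (u, j))}.
  move=> i j; rewrite !in_setC1 => i_np j_np; apply: contra_eq => neq_ij.
  apply: (good_colouring_digon good_f).
  - by rewrite xpair_eqE eqxx.
  - exact: arc_minus_clique.
  - by apply: arc_minus_clique; rewrite // eq_sym.
have [|j j_np f_j] := injective_onto_colours rainbow _ (f (u, plus_idx)).
  by rewrite cardsC1 card_ord.
rewrite in_setC1 in j_np; have [j_m|j_nm] := eqVneq j ord0; first by rewrite -f_j j_m.
suff: f (u, j) != f (u, plus_idx) by rewrite f_j eqxx.
apply: (good_colouring_digon good_f).
- by rewrite xpair_eqE eqxx.
- by apply: arc_plus_clique.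
- by apply: arc_plus_clique; rewrite // eq_sym.
Qed.

(* Second claim, first half: colouring u like u^- restricts a good colouring
   of G' to G, because dicycles of G lift to dicycles of G'. *)
Lemma good_colouring_restrict (f : gadget_vertex V k -> 'I_k) :
  good_colouring arc f -> good_colouring e (fun u => f (u, ord0)).
Proof.
move=> good_f c [c_ne c_uniq c_cycle].
have [|x [y [x_c y_c neq_xy]]] := good_f (lift_seq c).
  split; rewrite ?uniq_lift_seq ?cycle_lift_seq //.
  by case: c c_ne {c_uniq c_cycle}.
have colour_port z : port z.2 -> f z = f (z.1, ord0).
  by case: z => u i /= /portP[]->; rewrite ?(good_colouring_ports good_f).
move: x_c y_c neq_xy; rewrite !mem_lift_seq.
move=> /andP[x1_c /colour_port->] /andP[y1_c /colour_port->] neq_xy.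
by exists x.1, y.1.
Qed.

(* Extension of a colouring of G to G': the ports of u get the colour of u
   and u_1 .. u_{k-1} get the k - 1 other colours, in increasing order. *)
Definition extend_colouring (phi : V -> 'I_k) (x : gadget_vertex V k) : 'I_k :=
  if port x.2 then phi x.1 else lift (phi x.1) (inord (val x.2 - 2)).

(* Every arc leaving an internal vertex is bichromatic under the extension,
   since it stays inside a gadget whose vertices other than u^+ are rainbow. *)
Lemma extend_colouring_internal phi x y :
  ~~ port x.2 -> arc x y -> extend_colouring phi x != extend_colouring phi y.
Proof.
case: x y => u i [v j] /= internal_i.
have not_plus : i != plus_idx by apply: contraNneq internal_i => ->.
case/(arc_out_local not_plus) => /= -> neq_ji.
rewrite /extend_colouring /= (negbTE internal_i).
case: ifP => [_|internal_j]; first by rewrite eq_sym neq_lift.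
apply: contra neq_ji => /eqP/lift_inj/(congr1 val)/eqP.
move: internal_i internal_j (ltn_ord i) (ltn_ord j); rewrite /port -val_eqE /=.
by move=> internal_i /negbT internal_j lt_i lt_j; rewrite !inordK; lia.
Qed.

Lemma port_path_lifted u s :
  path arc (u, plus_idx) s -> all (fun x => port x.2) s ->
  is_plus (last (u, plus_idx) s).2 -> exists p, s = lift_seq p.
Proof.
have [m] := ubnP (size s); elim: m s u => // m IH [|[v i] [|[w j] s]] u //= size_s.
- by exists [::].
- rewrite andbT => arc_ui /andP[port_i _].
  by case: (portP port_i) arc_ui => -> //=; rewrite arc_plus_plus.
case/and3P => arc_ui arc_ij path_s /and3P[port_i port_j ports_s] last_s.
have i_m : i = ord0.
  by case: (portP port_i) arc_ui => -> //; rewrite arc_plus_plus.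
have [j_p w_v] : j = plus_idx /\ w = v.
  case: (portP port_j) arc_ij => ->; rewrite i_m ?arc_minus_minus //.
  by rewrite arc_minus_plus => /eqP.
subst i j w; have [|p ->] := IH s v _ path_s ports_s last_s; first by lia.
by exists (v :: p).
Qed.

Lemma port_dicycle_lifted c :
  dicycle arc c -> {in c, forall x, port x.2} ->
  exists2 p, dicycle e p & c =i lift_seq p.
Proof.
move=> [c_ne c_uniq c_cycle] ports_c.
have [u plus_c] : exists u, (u, plus_idx) \in c.
  case: c c_ne c_uniq c_cycle ports_c => [//|x s] _ _ c_cycle ports_c.
  have x_c := mem_head x s.
  have [x_m|x_p] := portP (ports_c _ x_c); last first.
    by exists x.1; rewrite -x_p -surjective_pairing.
  set y := next (x :: s) x.
  have y_c : y \in x :: s by rewrite mem_next.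
  have [y_m|y_p] := portP (ports_c _ y_c); last first.
    by exists y.1; rewrite -y_p -surjective_pairing.
  have := next_cycle c_cycle x_c; rewrite -/y.
  by rewrite [x]surjective_pairing [y]surjective_pairing x_m y_m arc_minus_minus.
case/rot_to: plus_c => r s rot_c.
have path_s : path arc (u, plus_idx) (rcons s (u, plus_idx)).
  by rewrite -(rot_cycle r) rot_c in c_cycle.
have ports_s : all (fun x => port x.2) (rcons s (u, plus_idx)).
  apply/allP => y; rewrite mem_rcons => y_s.
  by apply: ports_c; rewrite -(mem_rot r) rot_c.
have [|p lift_p] := port_path_lifted path_s ports_s; first by rewrite last_rcons.
have rot_c_lift : rot r c = rotr 1 (lift_seq p) by rewrite rot_c -lift_p rotr1_rcons.
exists p; last by move=> x; rewrite -(mem_rot r) rot_c_lift mem_rotr.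
split.
- by apply/eqP => p_nil; have := congr1 size lift_p; rewrite size_rcons p_nil.
- by rewrite -uniq_lift_seq -(rotr_uniq 1) -rot_c_lift rot_uniq.
- by rewrite -cycle_lift_seq -(rotr_cycle 1) -rot_c_lift rot_cycle.
Qed.

(* Second claim, second half: the extension of a good colouring of G is good,
   since a monochromatic dicycle of G' avoids internal vertices and is then
   the lift of a monochromatic dicycle of G. *)
Lemma good_colouring_extend phi :
  good_colouring e phi -> good_colouring arc (extend_colouring phi).
Proof.
move=> good_phi c dicycle_c; set f := extend_colouring phi.
case: (dicycle_c) => c_ne _ c_cycle.
case: c c_ne c_cycle dicycle_c => [//|x0 s] _ c_cycle dicycle_c.
have [/hasP[y y_c neq_y]|/hasPn mono] :=
  boolP (has (fun y => f y != f x0) (x0 :: s)).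
  by exists y, x0; rewrite mem_head.
have colour_c y : y \in x0 :: s -> f y = f x0 by move/mono; rewrite negbK => /eqP.
have ports_c : {in x0 :: s, forall x, port x.2}.
  move=> x x_c; apply: contraT => internal_x.
  have := extend_colouring_internal phi internal_x (next_cycle c_cycle x_c).
  by rewrite -/f !colour_c ?mem_next ?eqxx.
have [p dicycle_p c_lift] := port_dicycle_lifted dicycle_c ports_c.
have colour_p z : z \in p -> phi z = f x0.
  move=> z_p; rewrite -[phi z]/(f (z, ord0)) colour_c //.
  by rewrite c_lift mem_lift_seq z_p.
have [a [b [a_p b_p]]] := good_phi p dicycle_p.
by rewrite !colour_p ?eqxx.
Qed.

End Gadget.

Theorem mainTheorem10 (k : nat) (V : finType) (e : rel V) :
  2 <= k -> irreflexive e ->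
  delta_min (@gadget_arc V k e) <= k /\
  (dicolourable e k <-> dicolourable (@gadget_arc V k e) k).
Proof.
case: k => [|[|n]] // _ _; split; first exact: delta_min_gadget.
split=> -[f good_f].
- by exists (extend_colouring f); apply: good_colouring_extend.
- by exists (fun u => f (u, ord0)); apply: good_colouring_restrict.
Qed.
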